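(* Let $G=(V,E)$ be a connected, locally finite, undirected graph and $s:V\to\mathbb{R}$ with odometer $u_\infty$. The following are equivalent: (1) there exists a legal stabilizing toppling procedure for $s$; (2) there exists a stabilizing toppling procedure for $s$; (3) $\mathcal{F}_s\neq\emptyset$; (4) $u_\infty(x)<\infty$ for all $x\in V$; (5) every legal toppling procedure for $s$ is finite; (6) the parallel toppling procedure for $s$ is finite.
   Context: $\Delta u(x)=\sum_{y\sim x}(u(y)-u(x))$; $\mathcal{F}_s=\{f:V\to\mathbb{R}: f\ge0,\ s+\Delta f\le1\}$; odometer $u_\infty(x)=\inf\{f(x):f\in\mathcal{F}_s\}$ ($\inf\emptyset=\infty$). A toppling procedure: a well-ordered closed set $T\subset[0,\infty)$ with $0\in T$ and $(t,x)\mapsto u_t(x)\in[0,\infty)$ with $u_0=0$, $u_t(x)$ nondecreasing in $t$, and $t_n\uparrow t\Rightarrow u_{t_n}(x)\uparrow u_t(x)$. With $s_t=s+\Delta u_t$, $t^-=\sup\{r\in T:r<t\}$: legal for $s$ if $u_t(x)-u_{t^-}(x)\le (s_{t^-}(x)-1)^+/\deg(x)$ for all $x$, $t\in T\setminus\{0\}$; finite if $u_\infty(x)=\lim_{t\to\sup T}u_t(x)<\infty$ for all $x$; stabilizing if finite and $s+\Delta u_\infty\le1$. The parallel toppling procedure has $T=\mathbb{N}$ and $u_t(x)-u_{t-1}(x)=(s_{t-1}(x)-1)^+/\deg(x)$ for all $x$, $t\ge1$. *)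

From Stdlib Require Import Reals List Relations ZArith.
From Coquelicot Require Import Coquelicot.
Open Scope R_scope.

Record graph (V : Type) := Graph {
  nbrs : V -> list V;
  nbrs_nodup : forall x, NoDup (nbrs x);
  nbrs_sym : forall x y, In y (nbrs x) -> In x (nbrs y);
  nbrs_irrefl : forall x, ~ In x (nbrs x)
}.
Arguments nbrs {V} g x.

Definition adj {V} (G : graph V) (x y : V) : Prop := In y (nbrs G x).

Definition connected {V} (G : graph V) : Prop :=
  forall x y : V, clos_refl_trans V (adj G) x y.

(* every vertex has degree >= 1 (needed for the divisions by deg(x)) *)
Definition no_isolated {V} (G : graph V) : Prop :=
  forall x : V, nbrs G x <> nil.

Definition deg {V} (G : graph V) (x : V) : R := INR (length (nbrs G x)).

Definition lap {V} (G : graph V) (u : V -> R) (x : V) : R :=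
  fold_right Rplus 0 (map (fun y => u y - u x) (nbrs G x)).

Definition Fs {V} (G : graph V) (s : V -> R) (f : V -> R) : Prop :=
  (forall x, 0 <= f x) /\ (forall x, s x + lap G f x <= 1).

(* odometer u_∞(x) = inf { f x | f ∈ F_s } in the extended reals (inf ∅ = +∞) *)
Definition odometer {V} (G : graph V) (s : V -> R) (x : V) : Rbar :=
  Glb_Rbar (fun r => exists f, Fs G s f /\ r = f x).

Definition well_ordered (T : R -> Prop) : Prop :=
  forall A : R -> Prop, (forall r, A r -> T r) -> (exists r, A r) ->
    exists m, A m /\ forall r, A r -> m <= r.

(* A toppling procedure (T, u); only the values u t for t ∈ T matter. *)
Definition toppling_procedure {V} (T : R -> Prop) (u : R -> V -> R) : Prop :=
  well_ordered T /\ closed T /\ (forall t, T t -> 0 <= t) /\ T 0 /\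
  (forall x, u 0 x = 0) /\
  (forall t x, T t -> 0 <= u t x) /\
  (forall t t' x, T t -> T t' -> t <= t' -> u t x <= u t' x) /\
  (forall (tn : nat -> R) (t : R) (x : V),
      (forall n, T (tn n)) -> T t -> (forall n, tn n <= tn (S n)) ->
      is_lim_seq tn t -> is_lim_seq (fun n => u (tn n) x) (u t x)).

Definition tminus (T : R -> Prop) (t : R) : R :=
  real (Lub_Rbar (fun r => T r /\ r < t)).

Definition legal {V} (G : graph V) (s : V -> R) (T : R -> Prop) (u : R -> V -> R) : Prop :=
  forall t, T t -> t <> 0 -> forall x,
    u t x - u (tminus T t) x <= Rmax 0 (s x + lap G (u (tminus T t)) x - 1) / deg G x.

(* u_∞(x) = lim_{t -> sup T} u_t(x); since t ↦ u_t(x) is nondecreasing on T,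
   this limit is the supremum over T (in the extended reals). *)
Definition ulim {V} (T : R -> Prop) (u : R -> V -> R) (x : V) : Rbar :=
  Lub_Rbar (fun r => exists t, T t /\ r = u t x).

Definition finite_proc {V} (T : R -> Prop) (u : R -> V -> R) : Prop :=
  forall x : V, is_finite (ulim T u x).

Definition stabilizing {V} (G : graph V) (s : V -> R) (T : R -> Prop) (u : R -> V -> R) : Prop :=
  finite_proc T u /\ forall x, s x + lap G (fun y => real (ulim T u y)) x <= 1.

Fixpoint par_seq {V} (G : graph V) (s : V -> R) (n : nat) : V -> R :=
  match n with
  | O => fun _ => 0
  | S m => let p := par_seq G s m in
           fun x => p x + Rmax 0 (s x + lap G p x - 1) / deg G x
  end.

Definition par_T (t : R) : Prop := exists n : nat, t = INR n.

Definition par_u {V} (G : graph V) (s : V -> R) (t : R) : V -> R :=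
  par_seq G s (Z.to_nat (Int_part t)).

From Stdlib Require Import Reals List ZArith Lra Lia Classical ClassicalEpsilon.
From Coquelicot Require Import Coquelicot.
Open Scope R_scope.

(* Least action principle: a legal toppling procedure never overtakes a function
   f of F_s.  At the first time t at which u_t exceeds f somewhere, either
   t^- < t, and then one legal toppling of a configuration dominated by f cannot
   pass f since s + Δf <= 1, or t^- = t, and then left continuity carries u <= f
   over from the earlier times.  So F_s <> ∅ makes every legal procedure finite.
   Conversely the parallel procedure is legal and, when finite, its increments
   tend to 0, so its limit u_∞ satisfies s + Δu_∞ <= 1; and the limit of any
   stabilizing procedure lies in F_s. *)

Section Laplacian.

Context {V : Type} (G : graph V).

Definition nbr_sum (u : V -> R) (x : V) : R := fold_right Rplus 0 (map u (nbrs G x)).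

Lemma lap_nbr_sum u x : lap G u x = nbr_sum u x - deg G x * u x.
Proof.
  unfold lap, nbr_sum, deg. induction (nbrs G x) as [|a l IH]; cbn [map fold_right length].
  - simpl. ring.
  - rewrite IH, S_INR. ring.
Qed.

Lemma nbr_sum_le u v x : (forall y, u y <= v y) -> nbr_sum u x <= nbr_sum v x.
Proof.
  intros Huv. unfold nbr_sum. induction (nbrs G x) as [|a l IH]; simpl; [lra|].
  specialize (Huv a). lra.
Qed.

Lemma is_lim_seq_lap (un : nat -> V -> R) (v : V -> R) x :
  (forall y, is_lim_seq (fun n => un n y) (v y)) ->
  is_lim_seq (fun n => lap G (un n) x) (lap G v x).
Proof.
  intros Hcv. unfold lap. induction (nbrs G x) as [|a l IH]; simpl.
  - apply is_lim_seq_const.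
  - apply is_lim_seq_plus'; [apply is_lim_seq_minus'; apply Hcv | exact IH].
Qed.

Hypothesis HG : no_isolated G.

Lemma deg_gt0 x : 0 < deg G x.
Proof.
  unfold deg. specialize (HG x). destruct (nbrs G x) as [|a l]; [congruence|].
  simpl length. rewrite S_INR. pose proof (pos_INR (length l)). lra.
Qed.

Lemma topple_le_Fs s f u x : Fs G s f -> (forall y, u y <= f y) ->
  u x + Rmax 0 (s x + lap G u x - 1) / deg G x <= f x.
Proof.
  intros [_ Hf] Hu. pose proof (deg_gt0 x) as Hd. set (d := deg G x) in *.
  unfold Rmax. destruct (Rle_dec 0 (s x + lap G u x - 1)) as [Hpos|Hneg].
  - specialize (Hf x). rewrite lap_nbr_sum in Hf |- *. fold d in Hf |- *.
    pose proof (nbr_sum_le u f x Hu).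
    assert (Hstep : (s x + (nbr_sum u x - d * u x) - 1) / d <= f x - u x).
    { apply (Rmult_le_reg_r d); [lra|]. field_simplify; lra. }
    lra.
  - unfold Rdiv. rewrite Rmult_0_l. specialize (Hu x). lra.
Qed.

End Laplacian.

Lemma Lub_Rbar_Finite_spec (E : R -> Prop) l : Lub_Rbar E = Finite l ->
  (forall r, E r -> r <= l) /\ (forall eps, 0 < eps -> exists r, E r /\ l - eps < r).
Proof.
  intros Hl. destruct (Lub_Rbar_correct E) as [Hub Hlub]. rewrite Hl in Hub, Hlub.
  split; [exact Hub|]. intros eps Heps.
  apply NNPP. intros Hno.
  assert (Hub' : is_ub_Rbar E (l - eps)).
  { intros r Er. simpl. apply Rnot_lt_le. intros Hlt. apply Hno. eauto. }
  specialize (Hlub _ Hub'). simpl in Hlub. lra.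
Qed.

Lemma Lub_Rbar_bounded (E : R -> Prop) a b : E a -> (forall r, E r -> r <= b) ->
  is_finite (Lub_Rbar E).
Proof.
  intros Ea Hb. destruct (Lub_Rbar_correct E) as [Hub Hlub].
  destruct (Lub_Rbar E) as [l| |]; [reflexivity | exfalso..].
  - exact (Hlub b Hb).
  - exact (Hub a Ea).
Qed.

Lemma closed_Lub_Rbar_mem (T A : R -> Prop) l : closed T -> (forall r, A r -> T r) ->
  Lub_Rbar A = Finite l -> T l.
Proof.
  intros Hcl HAT Hl. destruct (Lub_Rbar_Finite_spec A l Hl) as [Hub Happ].
  apply Hcl. intros [eps Hnear].
  destruct (Happ eps (cond_pos eps)) as [r [Ar Hr]].
  apply (Hnear r); [|exact (HAT r Ar)].
  change (Rabs (r - l) < eps). specialize (Hub r Ar). apply Rabs_def1; lra.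
Qed.

Lemma is_lim_seq_inv_succ : is_lim_seq (fun n => / INR (S n)) 0.
Proof.
  assert (Hinf : is_lim_seq (fun n => INR (S n)) p_infty).
  { apply (is_lim_seq_incr_1 INR). apply is_lim_seq_INR. }
  apply (is_lim_seq_inv _ _ Hinf). discriminate.
Qed.

Fixpoint running_max (r : nat -> R) (n : nat) : R :=
  match n with O => r O | S k => Rmax (running_max r k) (r (S k)) end.

(* Take r n within 1/(n+1) of the supremum and make it monotone by running maxima. *)
Lemma nondecreasing_seq_to_sup (E : R -> Prop) l :
  (forall r, E r -> r <= l) -> (forall eps, 0 < eps -> exists r, E r /\ l - eps < r) ->
  exists tn : nat -> R,
    (forall n, E (tn n)) /\ (forall n, tn n <= tn (S n)) /\ is_lim_seq tn l.
Proof.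
  intros Hub Happ.
  assert (Hclose : forall n, exists r, E r /\ l - / INR (S n) < r).
  { intros n. apply Happ, Rinv_0_lt_compat, lt_0_INR. lia. }
  destruct (choice _ Hclose) as [r Hr].
  assert (HE : forall n, E (running_max r n)).
  { induction n as [|n IH]; simpl; [apply Hr|].
    unfold Rmax. destruct Rle_dec; [apply Hr | exact IH]. }
  exists (running_max r). split; [exact HE|]. split; [intros n; apply Rmax_l|].
  apply (is_lim_seq_le_le (fun n => l - / INR (S n)) _ (fun _ => l)).
  - intros n. split; [|exact (Hub _ (HE n))].
    assert (r n <= running_max r n) by (destruct n; simpl; [lra | apply Rmax_r]).
    pose proof (proj2 (Hr n)). lra.
  - replace (Finite l) with (Finite (l - 0)) by (f_equal; ring).
    apply is_lim_seq_minus'; [apply is_lim_seq_const | apply is_lim_seq_inv_succ].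
  - apply is_lim_seq_const.
Qed.

Lemma tminus_spec (T : R -> Prop) t : closed T -> T 0 -> 0 < t ->
  Lub_Rbar (fun r => T r /\ r < t) = Finite (tminus T t) /\
  T (tminus T t) /\ tminus T t <= t.
Proof.
  intros Hcl HT0 Ht.
  assert (Hfin : is_finite (Lub_Rbar (fun r => T r /\ r < t))).
  { apply (Lub_Rbar_bounded _ 0 t); [split; auto | intros r [_ Hr]; lra]. }
  assert (Hl : Lub_Rbar (fun r => T r /\ r < t) = Finite (tminus T t)).
  { unfold tminus. symmetry. exact Hfin. }
  split; [exact Hl|]. split.
  - exact (closed_Lub_Rbar_mem T _ _ Hcl (fun r Hr => proj1 Hr) Hl).
  - destruct (Lub_Rbar_Finite_spec _ _ Hl) as [_ Happ].
    apply Rnot_lt_le. intros Hlt.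
    destruct (Happ (tminus T t - t)) as [r [[_ Hr] Hr']]; lra.
Qed.

Section TopplingProcedure.

Context {V : Type} (T : R -> Prop) (u : R -> V -> R).
Hypothesis Htp : toppling_procedure T u.

Lemma toppling_le_at_limit_time t x c : T t ->
  Lub_Rbar (fun r => T r /\ r < t) = Finite t ->
  (forall r, T r -> r < t -> u r x <= c) -> u t x <= c.
Proof.
  intros Tt Hl Hbefore. destruct Htp as (_ & _ & _ & _ & _ & _ & _ & Hcont).
  destruct (Lub_Rbar_Finite_spec _ _ Hl) as [Hub Happ].
  destruct (nondecreasing_seq_to_sup _ _ Hub Happ) as (tn & Htn & Hincr & Hlim).
  pose proof (Hcont tn t x (fun n => proj1 (Htn n)) Tt Hincr Hlim) as Hcv.
  assert (Hle : forall n, u (tn n) x <= c) by (intros n; apply Hbefore; apply Htn).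
  exact (is_lim_seq_le _ _ _ _ Hle Hcv (is_lim_seq_const c)).
Qed.

Lemma ulim_ge t x : T t -> finite_proc T u -> u t x <= real (ulim T u x).
Proof.
  intros Tt Hfin. destruct (Lub_Rbar_correct (fun r => exists t, T t /\ r = u t x)) as [Hub _].
  specialize (Hub (u t x) (ex_intro _ t (conj Tt eq_refl))).
  unfold ulim. rewrite <- (Hfin x) in Hub. exact Hub.
Qed.

Lemma ulim_finite_bounded x b : (forall t, T t -> u t x <= b) -> is_finite (ulim T u x).
Proof.
  intros Hb. destruct Htp as (_ & _ & _ & HT0 & _).
  apply (Lub_Rbar_bounded _ (u 0 x) b); [eauto | intros r [t [Tt ->]]; auto].
Qed.

End TopplingProcedure.

Lemma legal_le_Fs {V} (G : graph V) s T u f : no_isolated G ->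
  toppling_procedure T u -> legal G s T u -> Fs G s f ->
  forall t, T t -> forall x, u t x <= f x.
Proof.
  intros HG Htp Hleg Hf.
  pose proof Htp as (Hwo & Hcl & Hpos & HT0 & Hu0 & _).
  apply NNPP. intros Hno.
  destruct (Hwo (fun r => T r /\ exists x, f x < u r x)) as [m [[Tm [x Hx]] Hfirst]].
  { intros r [Tr _]. exact Tr. }
  { apply NNPP. intros Hnone. apply Hno. intros t Tt y. apply Rnot_lt_le. intros Hlt.
    apply Hnone. eauto. }
  assert (Hbefore : forall r, T r -> r < m -> forall y, u r y <= f y).
  { intros r Tr Hrm y. apply Rnot_lt_le. intros Hlt.
    specialize (Hfirst r (conj Tr (ex_intro _ y Hlt))). lra. }
  assert (Hm0 : m <> 0).
  { intros ->. rewrite Hu0 in Hx. destruct Hf as [Hf0 _]. specialize (Hf0 x). lra. }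
  assert (Hm : 0 < m) by (pose proof (Hpos m Tm); lra).
  destruct (tminus_spec T m Hcl HT0 Hm) as (Hl & Tl & Hlm).
  destruct (Rlt_or_le (tminus T m) m) as [Hlt | Hge].
  - specialize (Hleg m Tm Hm0 x).
    pose proof (topple_le_Fs G HG s f _ x Hf (Hbefore _ Tl Hlt)). lra.
  - assert (Hlm' : tminus T m = m) by lra. rewrite Hlm' in Hl.
    pose proof (toppling_le_at_limit_time T u Htp m x (f x) Tm Hl
                  (fun r Tr Hr => Hbefore r Tr Hr x)). lra.
Qed.

Lemma INR_eq_of_close k m : Rabs (INR k - INR m) < 1 / 2 -> k = m.
Proof.
  intros Hkm. apply Rabs_def2 in Hkm.
  destruct (lt_eq_lt_dec k m) as [[Hlt | Heq] | Hlt]; auto; exfalso;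
    apply le_INR in Hlt; rewrite S_INR in Hlt; lra.
Qed.

Lemma par_T_well_ordered : well_ordered par_T.
Proof.
  intros A HA [r Ar]. destruct (HA r Ar) as [n ->].
  induction n as [n IH] using (well_founded_induction lt_wf).
  destruct (classic (exists k, (k < n)%nat /\ A (INR k))) as [[k [Hk Ak]] | Hno].
  - exact (IH k Hk Ak).
  - exists (INR n). split; [exact Ar|]. intros r' Ar'. destruct (HA r' Ar') as [k ->].
    apply le_INR. destruct (le_lt_dec n k); [assumption|]. exfalso. eauto.
Qed.

(* A real outside N has a neighbourhood free of naturals: use the gap to the
   nearest integers around it. *)
Lemma par_T_closed : closed par_T.
Proof.
  intros x Hx. apply NNPP. intros Hnx. apply Hx.
  destruct (Rlt_or_le x 0) as [Hneg | Hnn].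
  - exists (mkposreal (- x) ltac:(lra)). intros y Hy [k ->].
    change (Rabs (INR k - x) < - x) in Hy. apply Rabs_def2 in Hy.
    pose proof (pos_INR k). lra.
  - destruct (base_Int_part x) as [Hb1 Hb2].
    assert (Hz : (0 <= Int_part x)%Z).
    { assert (IZR (-1) < IZR (Int_part x)) as Hlt by lra. apply lt_IZR in Hlt. lia. }
    set (a := Z.to_nat (Int_part x)).
    assert (Ha : INR a = IZR (Int_part x)) by (unfold a; rewrite INR_IZR_INZ, Z2Nat.id; auto).
    assert (Hxa : x <> INR a) by (intros E; apply Hnx; exists a; auto).
    assert (Hxa1 : x <> INR (S a)) by (intros E; apply Hnx; exists (S a); auto).
    rewrite S_INR in Hxa1.
    set (gap := Rmin (x - INR a) (INR a + 1 - x)).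
    exists (mkposreal gap ltac:(apply Rmin_pos; lra)). intros y Hy [k ->].
    change (Rabs (INR k - x) < gap) in Hy. apply Rabs_def2 in Hy.
    assert (Hgap : gap <= x - INR a /\ gap <= INR a + 1 - x)
      by (split; [apply Rmin_l | apply Rmin_r]).
    destruct (le_lt_dec k a) as [Hk | Hk]; apply le_INR in Hk; [|rewrite S_INR in Hk]; lra.
Qed.

Section Parallel.

Context {V : Type} (G : graph V) (s : V -> R).
Hypothesis HG : no_isolated G.

Lemma par_seq_S n x : par_seq G s (S n) x =
  par_seq G s n x + Rmax 0 (s x + lap G (par_seq G s n) x - 1) / deg G x.
Proof. reflexivity. Qed.

Lemma par_seq_le_S n x : par_seq G s n x <= par_seq G s (S n) x.
Proof.
  rewrite par_seq_S. pose proof (deg_gt0 G HG x).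
  assert (0 <= Rmax 0 (s x + lap G (par_seq G s n) x - 1) / deg G x).
  { apply Rmult_le_pos; [apply Rmax_l | left; apply Rinv_0_lt_compat; assumption]. }
  lra.
Qed.

Lemma par_seq_ge0 n x : 0 <= par_seq G s n x.
Proof.
  induction n as [|n IH]; [simpl; lra|]. pose proof (par_seq_le_S n x). lra.
Qed.

Lemma par_seq_monotone n m x : (n <= m)%nat -> par_seq G s n x <= par_seq G s m x.
Proof.
  induction 1 as [|m _ IH]; [lra|]. pose proof (par_seq_le_S m x). lra.
Qed.

Lemma par_u_INR n : par_u G s (INR n) = par_seq G s n.
Proof.
  unfold par_u, Int_part. rewrite <- (tech_up (INR n) (Z.of_nat n + 1)).
  - replace (Z.of_nat n + 1 - 1)%Z with (Z.of_nat n) by lia. rewrite Nat2Z.id. reflexivity.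
  - rewrite plus_IZR, <- INR_IZR_INZ. lra.
  - rewrite plus_IZR, <- INR_IZR_INZ. lra.
Qed.

Lemma par_toppling_procedure : toppling_procedure par_T (par_u G s).
Proof.
  split; [exact par_T_well_ordered|]. split; [exact par_T_closed|].
  split; [intros t [n ->]; apply pos_INR|].
  split; [exists 0%nat; reflexivity|].
  split; [intros x; exact (f_equal (fun v => v x) (par_u_INR 0))|].
  split; [intros t x [n ->]; rewrite par_u_INR; apply par_seq_ge0|].
  split.
  { intros t t' x [n ->] [m ->] Hle. rewrite !par_u_INR.
    apply par_seq_monotone, INR_le, Hle. }
  (* Discrete times: a sequence of naturals converging to m is eventually m. *)
  intros tn t x Htn [m ->] _ Hlim.
  apply is_lim_seq_spec in Hlim. destruct (Hlim (mkposreal (1 / 2) ltac:(lra))) as [N HN].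
  apply (is_lim_seq_ext_loc (fun _ => par_u G s (INR m) x)); [|apply is_lim_seq_const].
  exists N. intros n Hn. specialize (HN n Hn). simpl in HN.
  destruct (Htn n) as [k Hk]. rewrite Hk in *. rewrite (INR_eq_of_close k m HN). reflexivity.
Qed.

Lemma par_tminus n : tminus par_T (INR (S n)) = INR n.
Proof.
  unfold tminus. rewrite (is_lub_Rbar_unique _ (INR n)); [reflexivity|]. split.
  - intros r [[k ->] Hk]. simpl. apply le_INR. apply INR_lt in Hk. lia.
  - intros b Hb. apply Hb. split; [exists n; reflexivity|]. apply lt_INR. lia.
Qed.

Lemma par_legal : legal G s par_T (par_u G s).
Proof.
  intros t [n ->] Hn0 x. destruct n as [|n]; [contradiction|].
  rewrite par_tminus, !par_u_INR, par_seq_S. lra.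
Qed.

Lemma is_lim_seq_par_seq x : finite_proc par_T (par_u G s) ->
  is_lim_seq (fun n => par_seq G s n x) (real (ulim par_T (par_u G s) x)).
Proof.
  intros Hfin. set (L := real (ulim par_T (par_u G s) x)).
  assert (Hl : Lub_Rbar (fun r => exists t, par_T t /\ r = par_u G s t x) = Finite L).
  { exact (eq_sym (Hfin x)). }
  destruct (Lub_Rbar_Finite_spec _ _ Hl) as [Hub Happ].
  apply is_lim_seq_spec. intros eps.
  destruct (Happ eps (cond_pos eps)) as [r [[t [[N ->] ->]] Hr]].
  rewrite par_u_INR in Hr. exists N. intros n Hn.
  pose proof (par_seq_monotone N n x Hn).
  assert (par_seq G s n x <= L).
  { apply Hub. exists (INR n). split; [exists n; reflexivity|]. now rewrite par_u_INR. }
  apply Rabs_def1; lra.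
Qed.

(* deg(x) (u_{n+1} - u_n)(x) >= s x + Δu_n(x) - 1, and the left side tends to 0. *)
Lemma par_stabilizing : finite_proc par_T (par_u G s) -> stabilizing G s par_T (par_u G s).
Proof.
  intros Hfin. split; [exact Hfin|]. intros x.
  set (L := fun y => real (ulim par_T (par_u G s) y)).
  pose proof (deg_gt0 G HG x) as Hd. set (d := deg G x) in *.
  set (un := fun n => par_seq G s n x).
  assert (Hexcess : is_lim_seq (fun n => s x + lap G (par_seq G s n) x - 1)
                               (s x + lap G L x - 1)).
  { apply is_lim_seq_minus'; [|apply is_lim_seq_const].
    apply is_lim_seq_plus'; [apply is_lim_seq_const|].
    apply is_lim_seq_lap. intros y. apply is_lim_seq_par_seq, Hfin. }
  assert (Hincr : is_lim_seq (fun n => d * (un (S n) - un n)) (d * (L x - L x))).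
  { pose proof (is_lim_seq_par_seq x Hfin) as Hcv.
    pose proof (proj1 (is_lim_seq_incr_1 un _) Hcv) as HcvS.
    exact (is_lim_seq_scal_l _ d _ (is_lim_seq_minus' _ _ _ _ HcvS Hcv)). }
  assert (Hbound : forall n, s x + lap G (par_seq G s n) x - 1 <= d * (un (S n) - un n)).
  { intros n. unfold un. rewrite par_seq_S. fold d.
    replace (d * (_ + _ / d - _)) with (Rmax 0 (s x + lap G (par_seq G s n) x - 1))
      by (field; lra).
    apply Rmax_r. }
  pose proof (is_lim_seq_le _ _ _ _ Hbound Hexcess Hincr) as Hle. simpl in Hle. lra.
Qed.

End Parallel.

Lemma stabilizing_Fs {V} (G : graph V) s T u :
  toppling_procedure T u -> stabilizing G s T u -> Fs G s (fun y => real (ulim T u y)).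
Proof.
  intros Htp [Hfin Hstab]. split; [|exact Hstab]. intros y.
  pose proof Htp as (_ & _ & _ & HT0 & Hu0 & _).
  rewrite <- (Hu0 y). exact (ulim_ge T u 0 y HT0 Hfin).
Qed.

Lemma Fs_legal_finite {V} (G : graph V) s f T u : no_isolated G -> Fs G s f ->
  toppling_procedure T u -> legal G s T u -> finite_proc T u.
Proof.
  intros HG Hf Htp Hleg x. apply (ulim_finite_bounded T u Htp x (f x)).
  intros t Tt. exact (legal_le_Fs G s T u f HG Htp Hleg Hf t Tt x).
Qed.

Lemma Fs_nonempty_odometer_finite {V} (G : graph V) s :
  (exists f, Fs G s f) <-> forall x, Rbar_lt (odometer G s x) p_infty.
Proof.
  split.
  - intros [f Hf] x. destruct (Glb_Rbar_correct (fun r => exists f, Fs G s f /\ r = f x))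
      as [Hlb _].
    specialize (Hlb (f x) (ex_intro _ f (conj Hf eq_refl))). unfold odometer.
    destruct (Glb_Rbar _); simpl in *; auto.
  - intros Hodo. apply NNPP. intros Hno.
    destruct (classic (exists x : V, True)) as [[x _] | Hempty].
    + specialize (Hodo x). unfold odometer in Hodo.
      destruct (Glb_Rbar_correct (fun r => exists f, Fs G s f /\ r = f x)) as [_ Hglb].
      assert (Hinf : is_lb_Rbar (fun r => exists f, Fs G s f /\ r = f x) p_infty).
      { intros r [f [Hf _]]. exfalso. eauto. }
      specialize (Hglb _ Hinf). destruct (Glb_Rbar _); simpl in *; auto.
    + apply Hno. exists (fun _ => 0). split; intros x; exfalso; eauto.
Qed.

Theorem corollary2p11 (V : Type) (G : graph V) (s : V -> R) :
  connected G -> no_isolated G ->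
  let P1 := exists (T : R -> Prop) (u : R -> V -> R),
              toppling_procedure T u /\ legal G s T u /\ stabilizing G s T u in
  let P2 := exists (T : R -> Prop) (u : R -> V -> R),
              toppling_procedure T u /\ stabilizing G s T u in
  let P3 := exists f : V -> R, Fs G s f in
  let P4 := forall x : V, Rbar_lt (odometer G s x) p_infty in
  let P5 := forall (T : R -> Prop) (u : R -> V -> R),
              toppling_procedure T u -> legal G s T u -> finite_proc T u in
  let P6 := finite_proc par_T (par_u G s) in
  (P1 <-> P2) /\ (P2 <-> P3) /\ (P3 <-> P4) /\ (P4 <-> P5) /\ (P5 <-> P6).
Proof.
  intros _ HG. intros P1 P2 P3 P4 P5 P6.
  assert (H12 : P1 -> P2) by (intros (T & u & Htp & _ & Hst); exists T, u; auto).
  assert (H23 : P2 -> P3).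
  { intros (T & u & Htp & Hst). eexists. exact (stabilizing_Fs G s T u Htp Hst). }
  assert (H34 : P3 <-> P4) by exact (Fs_nonempty_odometer_finite G s).
  assert (H35 : P3 -> P5).
  { intros [f Hf] T u. exact (Fs_legal_finite G s f T u HG Hf). }
  assert (H56 : P5 -> P6).
  { intros H5. exact (H5 _ _ (par_toppling_procedure G s HG) (par_legal G s)). }
  assert (H61 : P6 -> P1).
  { intros Hfin. exists par_T, (par_u G s).
    split; [exact (par_toppling_procedure G s HG)|].
    split; [exact (par_legal G s) | exact (par_stabilizing G s HG Hfin)]. }
  tauto.
Qed.
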